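(* Assume the setting below with $\mu_+(\infty)\le1$ and $\mu_-(\infty)<\infty$, and (A1), (A4), (A5), (A6). Let $0<\mu_0\le\mu_1<\infty$ be constants with $\mu_0\le f'(\rho)\le\mu_1$ and $\mu_0\rho\le f(\rho)\le\mu_1\rho$ for all $\rho\ge0$. Let $r$ be a regular equilibrium solution with $r(1)=\lambda>0$. Then $$\eta_0\tau(\rho)\le r'(\rho)\le\eta_1\tau(\rho)\qquad\text{for all }\rho\in(0,1],$$ where $\eta_0=\min\{\mu_0/\mu_1,\ q_0^{-1}(\mu_1/\mu_0)\}$ and $\eta_1=\max\{\mu_1/\mu_0,\ q_1^{-1}(\mu_0/\mu_1)\}$.
   Context: Setting: $n\ge2$; $\kappa$ continuous on $[0,\infty)$, $\kappa_\pm=\max\{\pm\kappa,0\}$, $\mu_\pm(\lambda)=\int_0^\lambda s\kappa_\pm(s)ds$ (and $\mu_\pm(\infty)$ the corresponding integrals over $[0,\infty)$); $f$ solves $f''+\kappa f=0$, $f(0)=0$, $f'(0)=1$. $\Phi(v_1,\dots,v_n)=\sum_i\phi(v_i)+h(v_1\cdots v_n)$, $\tau(\rho)=f(r(\rho))/f(\rho)$. An equilibrium solution with $r(1)=\lambda$ is $r\in C^1(0,1]$, twice differentiable on $(0,1)$, $r'>0$ on $(0,1]$, $r(0):=\lim_{\rho\to0^+}r(\rho)\ge0$, $r(1)=\lambda$, satisfying on $(0,1)$ $$f(\rho)\big[\phi''(r')+h''(r'\tau^{n-1})\tau^{2(n-1)}\big]r''=(n-1)\big[f'(r)\phi'(\tau)-f'(\rho)\phi'(r')\big]-(n-1)\big(f'(r)r'-f'(\rho)\tau\big)h''(r'\tau^{n-1})\,r'\tau^{2n-3};$$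 regular means $r(0)=0$. (A1) $h$ is $C^2$ and strictly convex. (A4) $\phi:(0,\infty)\to(0,\infty)$ is $C^2$ and convex. (A5) $v\phi'(v)$ is increasing. (A6) there is $t_0\ge0$ with $\phi'(t_0)=0$; $q_1(s)=\sup_{v>t_0}\phi'(v)/\phi'(sv)$ ($s\ge1$), $q_0(s)=\inf_{v>t_0/s}\phi'(v)/\phi'(sv)$ ($s\in(0,1]$) satisfy $q_1\in C^1[1,\infty)$, $q_0\in C^1(0,1]$, $q_1(s)\to0$ as $s\to\infty$, $q_0(s)\to\infty$ as $s\to0^+$, $q_1'<0$, $q_0'<0$. *)

From Stdlib Require Import Reals.
Open Scope R_scope.

Definition cont_within (D : R -> Prop) (g : R -> R) (x : R) : Prop :=
  limit1_in g D (g x) x.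

(* g has derivative l at x within D (one-sided at endpoints of intervals). *)
Definition has_deriv_within (D : R -> Prop) (g : R -> R) (x l : R) : Prop :=
  limit1_in (fun y => (g y - g x) / (y - x)) (fun y => D y /\ y <> x) l x.

Definition C1_on (D : R -> Prop) (g dg : R -> R) : Prop :=
  (forall x, D x -> has_deriv_within D g x (dg x)) /\
  (forall x, D x -> cont_within D dg x).

Definition C2_on (D : R -> Prop) (g dg ddg : R -> R) : Prop :=
  C1_on D g dg /\ C1_on D dg ddg.

Definition convex_on (D : R -> Prop) (g : R -> R) : Prop :=
  forall x y t, D x -> D y -> 0 <= t <= 1 ->
    g (t * x + (1 - t) * y) <= t * g x + (1 - t) * g y.

Definition strictly_convex_on (D : R -> Prop) (g : R -> R) : Prop :=
  forall x y t, D x -> D y -> x <> y -> 0 < t < 1 ->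
    g (t * x + (1 - t) * y) < t * g x + (1 - t) * g y.

Definition is_glb (E : R -> Prop) (m : R) : Prop :=
  (forall x, E x -> m <= x) /\ (forall b, (forall x, E x -> b <= x) -> b <= m).

Definition kappa_plus (kappa : R -> R) (s : R) : R := Rmax (kappa s) 0.
Definition kappa_minus (kappa : R -> R) (s : R) : R := Rmax (- kappa s) 0.

(* mu_+(oo) <= 1 : the (improper) integral of the nonnegative function
   s * kappa_+(s) over [0,oo) is at most 1, i.e. all partial integrals are. *)
Definition mu_plus_inf_le_1 (kappa : R -> R) : Prop :=
  forall L, 0 <= L ->
    exists pr : Riemann_integrable (fun s => s * kappa_plus kappa s) 0 L,
      RiemannInt pr <= 1.

Definition mu_minus_inf_finite (kappa : R -> R) : Prop :=
  exists B, forall L, 0 <= L ->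
    exists pr : Riemann_integrable (fun s => s * kappa_minus kappa s) 0 L,
      RiemannInt pr <= B.

From Stdlib Require Import Reals Lra Psatz.
Open Scope R_scope.

(* Put w = r'/tau with tau(y) = f(r(y))/f(y).  The equilibrium equation reads
   C r'' = (n-1) (B - K A) with C, K >= 0, where A = f tau' and B collects the
   phi'-terms.  Where w > eta1 one has A > 0 and, by (A5)-(A6), B < 0; hence
   r'' < 0 and w' < 0.  Symmetrically w < eta0 forces r'' > 0 and w' > 0.
   A barrier argument then shows that w(x) > eta1 at an interior x would keep
   w > eta1 on (0,x]: r is concave there, so r(y) >= r'(x) y, while
   y r' >= k r with k > 1 makes r = O(y^k) -- impossible.  The case w < eta0 is
   symmetric, and continuity of w at 1 closes the interval. *)

Lemma limit1_in_subset g D D' l x :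
  limit1_in g D l x -> (forall y, D' y -> D y) -> limit1_in g D' l x.
Proof.
  intros H HD eps He. destruct (H eps He) as [alp [Ha Hb]].
  exists alp; split; auto. intros y [Hy1 Hy2]. apply Hb; auto.
Qed.

Lemma limit_le_of_approx F D l a S :
  limit1_in F D l a ->
  (forall d, 0 < d -> exists y, D y /\ Rabs (y - a) < d /\ F y <= S) -> l <= S.
Proof.
  intros H Hp. destruct (Rle_or_lt l S) as [h|h]; auto.
  destruct (H (l - S)) as [alp [Ha Hb]]; [lra|].
  destruct (Hp alp Ha) as [y [Dy [Hy FS]]].
  assert (K := Hb y (conj Dy Hy)). simpl in K. unfold R_dist in K.
  apply Rabs_def2 in K. lra.
Qed.

Lemma limit_ge_of_approx F D l a S :
  limit1_in F D l a ->
  (forall d, 0 < d -> exists y, D y /\ Rabs (y - a) < d /\ S <= F y) -> S <= l.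
Proof.
  intros H Hp. destruct (Rle_or_lt S l) as [h|h]; auto.
  destruct (H (S - l)) as [alp [Ha Hb]]; [lra|].
  destruct (Hp alp Ha) as [y [Dy [Hy FS]]].
  assert (K := Hb y (conj Dy Hy)). simpl in K. unfold R_dist in K.
  apply Rabs_def2 in K. lra.
Qed.

Lemma near_left_end a b d : a < b -> 0 < d ->
  a < a + Rmin d (b - a) / 2 < b /\ Rabs (a + Rmin d (b - a) / 2 - a) < d.
Proof.
  intros. pose proof (Rmin_l d (b - a)). pose proof (Rmin_r d (b - a)).
  assert (0 < Rmin d (b - a)) by (apply Rmin_glb_lt; lra).
  split; [lra|]. rewrite Rabs_right; lra.
Qed.

Lemma near_right_end a b d : a < b -> 0 < d ->
  a < b - Rmin d (b - a) / 2 < b /\ Rabs (b - Rmin d (b - a) / 2 - b) < d.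
Proof.
  intros. pose proof (Rmin_l d (b - a)). pose proof (Rmin_r d (b - a)).
  assert (0 < Rmin d (b - a)) by (apply Rmin_glb_lt; lra).
  split; [lra|]. rewrite Rabs_left; lra.
Qed.

Lemma deriv_within_interior D g x l :
  has_deriv_within D g x l ->
  (exists d, 0 < d /\ forall y, Rabs (y - x) < d -> D y) ->
  derivable_pt_lim g x l.
Proof.
  intros H [d [Hd HD]] eps He.
  destruct (H eps He) as [alp [Ha Hb]].
  assert (Hm : 0 < Rmin alp d) by (apply Rmin_glb_lt; lra).
  exists (mkposreal _ Hm). intros h Hh Hlt. simpl in Hlt.
  pose proof (Rmin_l alp d). pose proof (Rmin_r alp d).
  assert (K := Hb (x + h)). simpl in K. unfold R_dist in K.
  replace (x + h - x) with h in K by ring.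
  apply K. split; [split|].
  - apply HD. replace (x + h - x) with h by ring. lra.
  - intro E. apply Hh. lra.
  - lra.
Qed.

Lemma deriv_within_cont D g x l :
  has_deriv_within D g x l -> limit1_in g D (g x) x.
Proof.
  intros H eps He.
  destruct (H 1 ltac:(lra)) as [alp [Ha Hb]].
  set (K := Rabs l + 1).
  assert (HK : 0 < K) by (unfold K; pose proof (Rabs_pos l); lra).
  assert (Hm : 0 < Rmin alp (eps / K)).
  { apply Rmin_glb_lt; auto. apply Rdiv_lt_0_compat; lra. }
  exists (Rmin alp (eps / K)). split; [lra|].
  intros y [Dy Hy]. simpl in Hy |- *. unfold R_dist in Hy |- *.
  pose proof (Rmin_l alp (eps / K)). pose proof (Rmin_r alp (eps / K)).
  destruct (Req_dec y x) as [->|Hne].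
  { replace (g x - g x) with 0 by ring. rewrite Rabs_R0. lra. }
  assert (Hya : dist R_met y x < alp) by (simpl; unfold R_dist; lra).
  assert (Q := Hb y (conj (conj Dy Hne) Hya)). simpl in Q. unfold R_dist in Q.
  replace (g y - g x) with ((g y - g x) / (y - x) * (y - x)) by (field; lra).
  rewrite Rabs_mult.
  assert (Rabs ((g y - g x) / (y - x)) < K).
  { unfold K. pose proof (Rabs_triang_inv ((g y - g x) / (y - x)) l). lra. }
  assert (Rabs (y - x) * K < eps).
  { apply (Rmult_lt_reg_r (/ K)). apply Rinv_0_lt_compat; lra.
    replace (Rabs (y - x) * K * / K) with (Rabs (y - x)) by (field; lra). lra. }
  pose proof (Rabs_pos (y - x)). pose proof (Rabs_pos ((g y - g x) / (y - x))).
  nra.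
Qed.

Lemma nondecreasing_of_deriv g dg a b :
  a <= b -> (forall c, a <= c <= b -> derivable_pt_lim g c (dg c)) ->
  (forall c, a < c < b -> 0 <= dg c) -> g a <= g b.
Proof.
  intros Hab Hd Hpos. destruct (Rle_lt_or_eq_dec _ _ Hab) as [Hlt| ->]; [|lra].
  destruct (MVT_cor2 g dg a b Hlt Hd) as [c [Hc1 Hc2]].
  assert (0 <= dg c) by (apply Hpos; lra). nra.
Qed.

Lemma nonincreasing_of_deriv g dg a b :
  a <= b -> (forall c, a <= c <= b -> derivable_pt_lim g c (dg c)) ->
  (forall c, a < c < b -> dg c <= 0) -> g b <= g a.
Proof.
  intros Hab Hd Hneg.
  cut (- g a <= - g b); [lra|].
  apply (nondecreasing_of_deriv (- g)%F (fun c => - dg c)); auto.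
  - intros c Hc. apply derivable_pt_lim_opp, Hd, Hc.
  - intros c Hc. assert (dg c <= 0) by (apply Hneg, Hc). lra.
Qed.

Lemma deriv_within_of_deriv D g x l :
  derivable_pt_lim g x l -> has_deriv_within D g x l.
Proof.
  intros H eps He. destruct (H eps He) as [del Hdel].
  exists del. split; [apply cond_pos|].
  intros y [[_ Hne] Hy]. simpl in y, Hy |- *. unfold R_dist in Hy |- *.
  assert (K := Hdel (y - x) ltac:(lra) Hy).
  replace (x + (y - x)) with y in K by ring. exact K.
Qed.

Lemma deriv_neg_quotient D g a l :
  has_deriv_within D g a l -> l < 0 ->
  exists alp, 0 < alp /\
    forall u, D u -> u <> a -> Rabs (u - a) < alp ->
      g u - g a = (g u - g a) / (u - a) * (u - a) /\ (g u - g a) / (u - a) < 0.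
Proof.
  intros H Hl. destruct (H (- l) ltac:(lra)) as [alp [Ha Hb]].
  exists alp. split; auto. intros u Du Hne Hu.
  assert (K := Hb u (conj (conj Du Hne) Hu)).
  simpl in K. unfold R_dist in K. apply Rabs_def2 in K.
  split; [field; lra|lra].
Qed.

Lemma deriv_neg_right D g a l b :
  has_deriv_within D g a l -> l < 0 -> a < b ->
  (forall u, a < u < b -> D u) -> exists u, a < u <= b /\ g u < g a.
Proof.
  intros H Hl Hab HD. destruct (deriv_neg_quotient D g a l H Hl) as [alp [Ha Hq]].
  destruct (near_left_end a b alp Hab Ha) as [Hu1 Hu2].
  set (u := a + Rmin alp (b - a) / 2) in *.
  destruct (Hq u (HD u Hu1) ltac:(lra) Hu2) as [E Q].
  exists u. split; [lra|]. set (q := (g u - g a) / (u - a)) in *. nra.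
Qed.

Lemma deriv_neg_left D g a l b :
  has_deriv_within D g a l -> l < 0 -> b < a ->
  (forall u, b < u < a -> D u) -> exists u, b <= u < a /\ g a < g u.
Proof.
  intros H Hl Hba HD. destruct (deriv_neg_quotient D g a l H Hl) as [alp [Ha Hq]].
  destruct (near_right_end b a alp Hba Ha) as [Hu1 Hu2].
  set (u := a - Rmin alp (a - b) / 2) in *.
  destruct (Hq u (HD u Hu1) ltac:(lra) Hu2) as [E Q].
  exists u. split; [lra|]. set (q := (g u - g a) / (u - a)) in *. nra.
Qed.

Lemma barrier_up w dw c x :
  0 < x < 1 ->
  (forall y, 0 < y < 1 -> derivable_pt_lim w y (dw y)) ->
  (forall y, 0 < y < 1 -> c < w y -> dw y < 0) ->
  c < w x -> forall y, 0 < y <= x -> w x <= w y.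
Proof.
  intros Hx Hd Hn Hc y Hy.
  destruct (Req_dec y x) as [->|Hne]; [lra|].
  destruct (continuity_ab_maj w y x ltac:(lra)) as [p [Hmax Hp]].
  { intros z Hz. apply derivable_continuous_pt. exists (dw z). apply Hd. lra. }
  destruct (Req_dec p y) as [->|Hpy]; [apply Hmax; lra|].
  assert (Hwp : w x <= w p) by (apply Hmax; lra).
  destruct (deriv_neg_left (fun _ => True) w p (dw p) y) as [t [Ht1 Ht2]].
  - apply deriv_within_of_deriv, Hd. lra.
  - apply Hn; lra.
  - lra.
  - auto.
  - assert (w t <= w p) by (apply Hmax; lra). lra.
Qed.

Lemma barrier_down w dw c x :
  0 < x < 1 ->
  (forall y, 0 < y < 1 -> derivable_pt_lim w y (dw y)) ->
  (forall y, 0 < y < 1 -> w y < c -> 0 < dw y) ->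
  w x < c -> forall y, 0 < y <= x -> w y <= w x.
Proof.
  intros Hx Hd Hn Hc y Hy.
  cut (- w x <= - w y); [lra|].
  apply (barrier_up (- w)%F (fun z => - dw z) (- c) x Hx); auto.
  - intros z Hz. apply derivable_pt_lim_opp, Hd, Hz.
  - intros z Hz H. assert (0 < dw z) by (apply Hn; unfold opp_fct in H; lra). lra.
  - unfold opp_fct. lra.
Qed.

(* The derivative of a convex function on (0,oo) is nondecreasing: both one-sided
   slopes are compared with the chord slope over [a,b]. *)
Lemma convex_deriv_mono g dg :
  convex_on (fun v => 0 < v) g ->
  (forall x, 0 < x -> has_deriv_within (fun v => 0 < v) g x (dg x)) ->
  forall a b, 0 < a -> a <= b -> dg a <= dg b.
Proof.
  intros Hc Hd a b Ha Hab.
  destruct (Rle_lt_or_eq_dec _ _ Hab) as [Hlt| ->]; [|lra].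
  assert (Hchord : forall y, a < y < b ->
     (g y - g a) * (b - a) <= (g b - g a) * (y - a)).
  { intros y Hy. set (t := (b - y) / (b - a)).
    assert (Ht : t * (b - a) = b - y) by (unfold t; field; lra).
    assert (0 <= t <= 1) by (clearbody t; split; nra).
    assert (K : g (t * a + (1 - t) * b) <= t * g a + (1 - t) * g b) by (apply Hc; lra).
    replace (t * a + (1 - t) * b) with y in K by nra. clearbody t. nra. }
  apply Rle_trans with ((g b - g a) / (b - a)).
  - apply (limit_le_of_approx _ _ _ _ _ (Hd a Ha)). intros d Hd0.
    destruct (near_left_end a b d Hlt Hd0) as [Hy1 Hy2].
    set (y := a + Rmin d (b - a) / 2) in *.
    exists y. split; [split; lra|]. split; auto.
    assert (K := Hchord y Hy1).
    apply (Rmult_le_reg_r ((y - a) * (b - a))); [nra|].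
    replace ((g y - g a) / (y - a) * ((y - a) * (b - a))) with ((g y - g a) * (b - a))
      by (field; lra).
    replace ((g b - g a) / (b - a) * ((y - a) * (b - a))) with ((g b - g a) * (y - a))
      by (field; lra). exact K.
  - apply (limit_ge_of_approx _ _ _ _ _ (Hd b ltac:(lra))). intros d Hd0.
    destruct (near_right_end a b d Hlt Hd0) as [Hy1 Hy2].
    set (y := b - Rmin d (b - a) / 2) in *.
    exists y. split; [split; lra|]. split; auto.
    assert (K := Hchord y Hy1).
    apply (Rmult_le_reg_r ((b - y) * (b - a))); [nra|].
    replace ((g y - g b) / (y - b) * ((b - y) * (b - a))) with ((g b - g y) * (b - a))
      by (field; lra).
    replace ((g b - g a) / (b - a) * ((b - y) * (b - a))) with ((g b - g a) * (b - y))
      by (field; lra). nra.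
Qed.

Lemma mono_deriv_nonneg g dg x :
  (forall a b, 0 < a -> a <= b -> g a <= g b) ->
  has_deriv_within (fun v => 0 < v) g x dg -> 0 < x -> 0 <= dg.
Proof.
  intros Hm Hd Hx. apply (limit_ge_of_approx _ _ _ _ _ Hd). intros d Hd0.
  exists (x + d / 2). split; [split; lra|]. split.
  - rewrite Rabs_right; lra.
  - apply Rmult_le_pos; [assert (g x <= g (x + d / 2)) by (apply Hm; lra); lra|].
    left; apply Rinv_0_lt_compat; lra.
Qed.

Lemma strictly_convex_convex g :
  strictly_convex_on (fun v => 0 < v) g -> convex_on (fun v => 0 < v) g.
Proof.
  intros H x y t Hx Hy Ht.
  destruct (Req_dec x y) as [->|Hne].
  { replace (t * y + (1 - t) * y) with y by ring. lra. }
  destruct (Req_dec t 0) as [->|H0].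
  { replace (0 * x + (1 - 0) * y) with y by ring. lra. }
  destruct (Req_dec t 1) as [->|H1].
  { replace (1 * x + (1 - 1) * y) with x by ring. lra. }
  left. apply H; auto. lra.
Qed.

(* (A5)+(A6): phi' is nonpositive on (0,t0] and positive on (t0,oo).  When
   t0 = 0 the product v phi'(v) is increasing with limit 0 at 0+. *)
Lemma dphi_sign dphi t0 :
  (forall v w, 0 < v -> v < w -> v * dphi v < w * dphi w) ->
  (0 < t0 /\ dphi t0 = 0) \/ (t0 = 0 /\ limit1_in dphi (fun v => 0 < v) 0 0) ->
  forall v, 0 < v -> (v <= t0 -> dphi v <= 0) /\ (t0 < v -> 0 < dphi v).
Proof.
  intros HA5 [[Ht0 Hd0] | [-> Hlim]] v Hv.
  - split; intro Hvt.
    + destruct (Rle_lt_or_eq_dec _ _ Hvt) as [Hlt| ->]; [|lra].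
      assert (K := HA5 v t0 Hv Hlt). rewrite Hd0 in K. nra.
    + assert (K := HA5 t0 v Ht0 Hvt). rewrite Hd0 in K. nra.
  - split; intro Hvt; [lra|].
    assert (Hl : limit1_in (fun u => u * dphi u) (fun u => 0 < u) 0 0).
    { replace 0 with (0 * 0) at 1 by ring. apply limit_mul; auto. apply lim_x. }
    assert (Hnn : 0 <= v / 2 * dphi (v / 2)).
    { apply (limit_le_of_approx _ _ _ _ _ Hl). intros d Hd.
      destruct (near_left_end 0 (v / 2) d ltac:(lra) Hd) as [Hy1 Hy2].
      eexists; split; [|split; [exact Hy2|]]; [simpl; lra|].
      left. apply HA5; lra. }
    assert (K := HA5 (v / 2) v ltac:(lra) ltac:(lra)). nra.
Qed.

(* (A6) for q1: since q1 strictly decreases, for s > s1 every quotient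
   phi'(T)/phi'(sT) with T > t0 stays strictly below q1 s1. *)
Lemma q1_comparison dphi t0 q1 dq1 s1 :
  (forall v, 0 < v -> t0 < v -> 0 < dphi v) ->
  (forall a b, 0 < a -> a <= b -> dphi a <= dphi b) ->
  (forall s, 1 <= s ->
     is_lub (fun z => exists v, t0 < v /\ z = dphi v / dphi (s * v)) (q1 s)) ->
  C1_on (fun s => 1 <= s) q1 dq1 -> (forall s, 1 <= s -> dq1 s < 0) -> 1 <= s1 ->
  forall s, s1 < s -> forall T, 0 < T -> t0 < T -> dphi T < q1 s1 * dphi (s * T).
Proof.
  intros Hpos Hmono Hlub HC1 Hdq Hs1 s Hs T HT HtT.
  destruct (deriv_neg_right _ q1 s1 (dq1 s1) s (proj1 HC1 s1 Hs1) (Hdq s1 Hs1) Hs)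
    as [s' [Hs' Hq]]; [intros u Hu; lra|].
  assert (HpT : 0 < dphi T) by auto.
  assert (Hp' : 0 < dphi (s' * T)) by (apply Hpos; nra).
  assert (Hps : dphi (s' * T) <= dphi (s * T)) by (apply Hmono; nra).
  assert (Hle : dphi T / dphi (s' * T) <= q1 s').
  { apply (proj1 (Hlub s' ltac:(lra))). exists T; auto. }
  assert (Hq' : 0 < q1 s').
  { assert (0 < dphi T / dphi (s' * T)) by (apply Rdiv_lt_0_compat; auto). lra. }
  assert (K : dphi T <= q1 s' * dphi (s' * T)).
  { apply (Rmult_le_compat_r (dphi (s' * T))) in Hle; [|lra].
    replace (dphi T / dphi (s' * T) * dphi (s' * T)) with (dphi T) in Hle
      by (field; lra). exact Hle. }
  nra.
Qed.

(* (A6) for q0: since q0 strictly decreases, for s < s0 every quotient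
   phi'(T)/phi'(sT) with sT > t0 stays strictly above q0 s0. *)
Lemma q0_comparison dphi t0 q0 dq0 s0 :
  (forall v, 0 < v -> t0 < v -> 0 < dphi v) ->
  (forall a b, 0 < a -> a <= b -> dphi a <= dphi b) ->
  (forall s, 0 < s <= 1 ->
     is_glb (fun z => exists v, t0 / s < v /\ z = dphi v / dphi (s * v)) (q0 s)) ->
  C1_on (fun s => 0 < s <= 1) q0 dq0 -> (forall s, 0 < s <= 1 -> dq0 s < 0) ->
  0 < s0 <= 1 ->
  forall s, 0 < s < s0 -> forall T, 0 < T -> t0 < s * T -> q0 s0 * dphi (s * T) < dphi T.
Proof.
  intros Hpos Hmono Hglb HC1 Hdq Hs0 s Hs T HT HtT.
  destruct (deriv_neg_left _ q0 s0 (dq0 s0) s (proj1 HC1 s0 Hs0) (Hdq s0 Hs0)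
    ltac:(lra)) as [s' [Hs' Hq]]; [intros u Hu; lra|].
  assert (Hps0 : 0 < dphi (s * T)) by (apply Hpos; nra).
  assert (Hps : dphi (s * T) <= dphi (s' * T)) by (apply Hmono; nra).
  assert (HpT : 0 < dphi T) by (apply Hpos; nra).
  assert (Hge : q0 s' <= dphi T / dphi (s' * T)).
  { apply (proj1 (Hglb s' ltac:(lra))). exists T. split; auto.
    apply (Rmult_lt_reg_r s'); [lra|].
    replace (t0 / s' * s') with t0 by (field; lra). nra. }
  assert (K : q0 s' * dphi (s' * T) <= dphi T).
  { apply (Rmult_le_compat_r (dphi (s' * T))) in Hge; [|lra].
    replace (dphi T / dphi (s' * T) * dphi (s' * T)) with (dphi T) in Hge
      by (field; lra). exact Hge. }
  destruct (Rle_or_lt (q0 s0) 0) as [Hneg|Hq0]; nra.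
Qed.

(* A function tending to 0 at 0+ whose derivative is at least A on (0,rho)
   lies above the line A y at rho (mean value theorem, then let e -> 0+). *)
Lemma slope_lower_from_origin g dg D A rho :
  limit1_in g D 0 0 -> 0 < rho -> (forall e, 0 < e < rho -> D e) ->
  (forall y, 0 < y <= rho -> derivable_pt_lim g y (dg y)) ->
  (forall y, 0 < y < rho -> A <= dg y) -> A * rho <= g rho.
Proof.
  intros Hl Hrho HD Hd Hslope.
  assert (Hlim : limit1_in (fun e => g e - A * e) D 0 0).
  { replace 0 with (0 - A * 0) at 1 by ring.
    apply limit_minus; [exact Hl|]. apply limit_mul; [exact (limit_free (fun _ => A) D 0 0)|apply lim_x]. }
  cut (0 <= g rho - A * rho); [lra|].
  apply (limit_le_of_approx _ _ _ _ _ Hlim). intros d Hd0.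
  destruct (near_left_end 0 rho d Hrho Hd0) as [He Hed].
  eexists; split; [apply HD, He|split; [exact Hed|]].
  set (e := 0 + Rmin d (rho - 0) / 2) in *.
  destruct (MVT_cor2 g dg e rho ltac:(lra)) as [c [Hc1 Hc2]].
  { intros c Hc. apply Hd. lra. }
  assert (A <= dg c) by (apply Hslope; lra). nra.
Qed.

Lemma slope_upper_from_origin g dg D B rho :
  limit1_in g D 0 0 -> 0 < rho -> (forall e, 0 < e < rho -> D e) ->
  (forall y, 0 < y <= rho -> derivable_pt_lim g y (dg y)) ->
  (forall y, 0 < y < rho -> dg y <= B) -> g rho <= B * rho.
Proof.
  intros Hl Hrho HD Hd Hslope.
  cut (- B * rho <= - g rho); [lra|].
  apply (slope_lower_from_origin (- g)%F (fun y => - dg y) D); auto.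
  - replace 0 with (- 0) at 1 by ring. apply limit_Ropp, Hl.
  - intros y Hy. apply derivable_pt_lim_opp, Hd, Hy.
  - intros y Hy. assert (dg y <= B) by (apply Hslope, Hy). lra.
Qed.

Lemma log_ratio_deriv g dg k y :
  0 < y -> 0 < g y -> derivable_pt_lim g y (dg y) ->
  derivable_pt_lim (fun z => ln (g z) - k * ln z) y ((y * dg y - k * g y) / (g y * y)).
Proof.
  intros Hy Hg Hd.
  assert (K : derivable_pt_lim (comp ln g - mult_real_fct k ln)%F y (/ g y * dg y - k * / y)).
  { apply derivable_pt_lim_minus.
    - apply derivable_pt_lim_comp; [exact Hd|]. apply derivable_pt_lim_ln, Hg.
    - apply derivable_pt_lim_scal, derivable_pt_lim_ln, Hy. }
  replace ((y * dg y - k * g y) / (g y * y)) with (/ g y * dg y - k * / y) by (field; lra).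
  exact K.
Qed.

Lemma ln_le x y : 0 < x -> x <= y -> ln x <= ln y.
Proof.
  intros Hx Hxy. destruct (Rle_lt_or_eq_dec _ _ Hxy) as [Hlt| ->]; [|lra].
  left; apply ln_increasing; auto.
Qed.

Lemma small_ln x C a : 0 < x -> 0 < a -> exists rho, 0 < rho <= x /\ C < a * (- ln rho).
Proof.
  intros Hx Ha. set (T := Rmax (- ln x) (C / a + 1)).
  exists (exp (- T)). split; [split|].
  - apply exp_pos.
  - assert (HT : - T <= ln x) by (unfold T; pose proof (Rmax_l (- ln x) (C / a + 1)); lra).
    rewrite <- (exp_ln x Hx).
    destruct (Rle_lt_or_eq_dec _ _ HT) as [Hlt|Heq]; [left; apply exp_increasing, Hlt|].
    rewrite Heq; lra.
  - rewrite ln_exp. assert (C / a + 1 <= T) by apply Rmax_r.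
    assert (a * (C / a + 1) <= a * T) by (apply Rmult_le_compat_l; lra).
    replace (a * (C / a + 1)) with (C + a) in * by (field; lra). lra.
Qed.

(* A positive function with y g'(y) >= k g(y), k > 1, on (0,x] satisfies
   g(y) <= C y^k near 0+, so it cannot stay above a line a y with a > 0. *)
Lemma no_superlinear_decay g dg a k x :
  0 < x -> 0 < a -> 1 < k ->
  (forall y, 0 < y <= x -> derivable_pt_lim g y (dg y)) ->
  (forall y, 0 < y <= x -> a * y <= g y) ->
  (forall y, 0 < y < x -> k * g y <= y * dg y) -> False.
Proof.
  intros Hx Ha Hk Hd Hlow Hgrow.
  assert (Hpos : forall y, 0 < y <= x -> 0 < g y).
  { intros y Hy. assert (a * y <= g y) by auto. nra. }
  assert (Hmono : forall rho, 0 < rho <= x ->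
            ln (g rho) - k * ln rho <= ln (g x) - k * ln x).
  { intros rho Hrho.
    apply (nondecreasing_of_deriv (fun z => ln (g z) - k * ln z)
             (fun y => (y * dg y - k * g y) / (g y * y))); [lra| |].
    - intros c Hc. apply log_ratio_deriv; [lra|apply Hpos; lra|apply Hd; lra].
    - intros c Hc. assert (0 < g c) by (apply Hpos; lra).
      assert (k * g c <= c * dg c) by (apply Hgrow; lra).
      apply Rmult_le_pos; [lra|]. left; apply Rinv_0_lt_compat; nra. }
  destruct (small_ln x (ln (g x) - k * ln x - ln a) (k - 1) Hx ltac:(lra))
    as [rho [Hrho Hbig]].
  assert (K1 := Hmono rho Hrho).
  assert (K2 : ln a + ln rho <= ln (g rho)).
  { rewrite <- ln_mult by lra. apply ln_le; [nra|apply Hlow, Hrho]. }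
  nra.
Qed.

(* Symmetrically, a positive function with y g'(y) <= k g(y), k < 1, on (0,x]
   satisfies g(y) >= c y^k near 0+, so it cannot stay below a line a y. *)
Lemma no_sublinear_decay g dg a k x :
  0 < x -> 0 < a -> k < 1 ->
  (forall y, 0 < y <= x -> derivable_pt_lim g y (dg y)) ->
  (forall y, 0 < y <= x -> 0 < g y) ->
  (forall y, 0 < y <= x -> g y <= a * y) ->
  (forall y, 0 < y < x -> y * dg y <= k * g y) -> False.
Proof.
  intros Hx Ha Hk Hd Hpos Hup Hgrow.
  assert (Hmono : forall rho, 0 < rho <= x ->
            ln (g x) - k * ln x <= ln (g rho) - k * ln rho).
  { intros rho Hrho.
    apply (nonincreasing_of_deriv (fun z => ln (g z) - k * ln z)
             (fun y => (y * dg y - k * g y) / (g y * y))); [lra| |].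
    - intros c Hc. apply log_ratio_deriv; [lra|apply Hpos; lra|apply Hd; lra].
    - intros c Hc. assert (0 < g c) by (apply Hpos; lra).
      assert (c * dg c <= k * g c) by (apply Hgrow; lra).
      assert (0 < / (g c * c)) by (apply Rinv_0_lt_compat; nra).
      unfold Rdiv. nra. }
  destruct (small_ln x (ln a - (ln (g x) - k * ln x)) (1 - k) Hx ltac:(lra))
    as [rho [Hrho Hbig]].
  assert (K1 := Hmono rho Hrho).
  assert (K2 : ln (g rho) <= ln a + ln rho).
  { rewrite <- ln_mult by lra. apply ln_le; [apply Hpos, Hrho|apply Hup, Hrho]. }
  nra.
Qed.

Lemma bounds_at_right_end g a b lo hi :
  a < b -> limit1_in g (fun y => a < y <= b) (g b) b ->
  (forall y, a < y < b -> lo <= g y <= hi) -> lo <= g b <= hi.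
Proof.
  intros Hab Hc Hb. split.
  - apply (limit_ge_of_approx _ _ _ _ _ Hc). intros d Hd.
    destruct (near_right_end a b d Hab Hd) as [Hy Hyd].
    eexists; split; [|split; [exact Hyd|apply Hb, Hy]]. lra.
  - apply (limit_le_of_approx _ _ _ _ _ Hc). intros d Hd.
    destruct (near_right_end a b d Hab Hd) as [Hy Hyd].
    eexists; split; [|split; [exact Hyd|apply Hb, Hy]]. lra.
Qed.

(* A regular equilibrium solution r on (0,1], under the consequences of the
   structural assumptions that the argument actually uses.  The quantity to be
   trapped between eta0 and eta1 is w = r' / tau. *)
Section EquilibriumBounds.

Variable n : nat.
Hypothesis hn : (2 <= n)%nat.

Variables f df : R -> R.
Variables mu0 mu1 : R.
Hypothesis Hmu : 0 < mu0 <= mu1.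
Hypothesis Hf : C1_on (fun y => 0 <= y) f df.
Hypothesis Hdf_bounds : forall x, 0 <= x -> mu0 <= df x <= mu1.
Hypothesis Hf_bounds : forall x, 0 <= x -> mu0 * x <= f x <= mu1 * x.

(* Consequences of (A1), (A4), (A5), (A6) for phi and h. *)
Variables dphi ddphi ddh : R -> R.
Variable t0 : R.
Hypothesis Hddphi : forall v, 0 < v -> 0 <= ddphi v.
Hypothesis Hddh : forall v, 0 < v -> 0 <= ddh v.
Hypothesis Hv_dphi : forall u v, 0 < u -> u < v -> u * dphi u < v * dphi v.
Hypothesis Hdphi_sign :
  forall v, 0 < v -> (v <= t0 -> dphi v <= 0) /\ (t0 < v -> 0 < dphi v).

(* The thresholds eta1 >= mu1/mu0 and eta0 <= mu0/mu1, with the strict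
   comparisons of phi'(T) and phi'(sT) that (A6) provides beyond them. *)
Variables eta0 eta1 : R.
Hypothesis Heta1 : mu1 / mu0 <= eta1.
Hypothesis Hcmp1 : forall s, eta1 < s -> forall T, 0 < T -> t0 < T ->
  dphi T < mu0 / mu1 * dphi (s * T).
Hypothesis Heta0 : eta0 <= mu0 / mu1.
Hypothesis Hcmp0 : forall s, 0 < s < eta0 -> forall T, 0 < T -> t0 < s * T ->
  mu1 / mu0 * dphi (s * T) < dphi T.

Variables r dr ddr : R -> R.
Hypothesis Hr1 : C1_on (fun x => 0 < x <= 1) r dr.
Hypothesis Hr2 : forall x, 0 < x < 1 -> derivable_pt_lim dr x (ddr x).
Hypothesis Hrpos : forall x, 0 < x <= 1 -> 0 < dr x.
Hypothesis Hreg : limit1_in r (fun x => 0 < x <= 1) 0 0.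
Hypothesis Hr_end : 0 < r 1.
Hypothesis Hode : forall x, 0 < x < 1 ->
  let tau := f (r x) / f x in
  f x * (ddphi (dr x) + ddh (dr x * tau ^ (n - 1)) * tau ^ (2 * (n - 1))) * ddr x
  = (INR n - 1) * (df (r x) * dphi tau - df x * dphi (dr x))
    - (INR n - 1) * (df (r x) * dr x - df x * tau)
      * ddh (dr x * tau ^ (n - 1)) * dr x * tau ^ (2 * n - 3).

Lemma f_deriv z : 0 < z -> derivable_pt_lim f z (df z).
Proof.
  intros Hz. apply (deriv_within_interior (fun y => 0 <= y)); [apply (proj1 Hf); lra|].
  exists z. split; auto. intros u Hu. apply Rabs_def2 in Hu. lra.
Qed.

Lemma f_pos z : 0 < z -> 0 < f z.
Proof. intros Hz. destruct (Hf_bounds z ltac:(lra)). nra. Qed.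

Lemma r_deriv y : 0 < y < 1 -> derivable_pt_lim r y (dr y).
Proof.
  intros Hy. apply (deriv_within_interior (fun x => 0 < x <= 1)); [apply (proj1 Hr1); lra|].
  exists (Rmin y (1 - y)). split; [apply Rmin_glb_lt; lra|].
  intros z Hz. pose proof (Rmin_l y (1 - y)). pose proof (Rmin_r y (1 - y)).
  apply Rabs_def2 in Hz. lra.
Qed.

(* A regular solution is positive: it starts at 0 and increases. *)
Lemma r_pos y : 0 < y <= 1 -> 0 < r y.
Proof.
  intros Hy. destruct (Req_dec y 1) as [->|Hne]; [exact Hr_end|].
  assert (Hhalf : 0 * (y / 2) <= r (y / 2)).
  { apply (slope_lower_from_origin r dr (fun x => 0 < x <= 1)); auto; try lra.
    - intros e He. lra.
    - intros z Hz. apply r_deriv. lra.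
    - intros z Hz. left. apply Hrpos. lra. }
  destruct (MVT_cor2 r dr (y / 2) y ltac:(lra)) as [c [Hc1 Hc2]].
  { intros c Hc. apply r_deriv. lra. }
  assert (0 < dr c) by (apply Hrpos; lra). nra.
Qed.

Definition tau y := f (r y) / f y.
Definition w y := dr y / tau y.

Lemma tau_pos y : 0 < y <= 1 -> 0 < tau y.
Proof. intros Hy. apply Rdiv_lt_0_compat; apply f_pos; [apply r_pos|]; lra. Qed.

Lemma dr_eq y : 0 < y <= 1 -> dr y = w y * tau y.
Proof. intros Hy. assert (0 < tau y) by (apply tau_pos, Hy). unfold w; field; lra. Qed.

Lemma w_pos y : 0 < y <= 1 -> 0 < w y.
Proof. intros Hy. apply Rdiv_lt_0_compat; [apply Hrpos|apply tau_pos]; exact Hy. Qed.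

Lemma tau_bounds y : 0 < y <= 1 ->
  mu0 * r y <= tau y * (mu1 * y) /\ tau y * (mu0 * y) <= mu1 * r y.
Proof.
  intros Hy. assert (0 < r y) by (apply r_pos, Hy).
  destruct (Hf_bounds (r y) ltac:(lra)). destruct (Hf_bounds y ltac:(lra)).
  assert (0 < f y) by (apply f_pos; lra).
  assert (E : tau y * f y = f (r y)) by (unfold tau; field; lra).
  assert (0 < tau y) by (apply tau_pos, Hy). split; nra.
Qed.

(* f(y) tau'(y) = A y, and B y is the phi'-part of the equilibrium equation. *)
Definition A y := df (r y) * dr y - df y * tau y.
Definition B y := df (r y) * dphi (tau y) - df y * dphi (dr y).
Definition dw y := (ddr y * tau y - A y / f y * dr y) / (tau y)².

Lemma w_deriv y : 0 < y < 1 -> derivable_pt_lim w y (dw y).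
Proof.
  intros Hy. assert (Hfy : 0 < f y) by (apply f_pos; lra).
  assert (Ht : derivable_pt_lim (comp f r / f)%F y
       ((df (r y) * dr y * f y - df y * comp f r y) / (f y)²)).
  { apply derivable_pt_lim_div; [|apply f_deriv; lra|lra].
    apply derivable_pt_lim_comp; [apply r_deriv, Hy|apply f_deriv, r_pos; lra]. }
  replace ((df (r y) * dr y * f y - df y * comp f r y) / (f y)²) with (A y / f y) in Ht
    by (unfold A, tau, comp, Rsqr; field; lra).
  apply (derivable_pt_lim_div dr tau y (ddr y) (A y / f y)); [apply Hr2, Hy|exact Ht|].
  assert (0 < tau y) by (apply tau_pos; lra). lra.
Qed.

Lemma ode_structure y : 0 < y < 1 ->
  exists C K, 0 <= C /\ 0 <= K /\ C * ddr y = (INR n - 1) * (B y - K * A y).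
Proof.
  intros Hy. assert (HO := Hode y Hy). cbv zeta in HO. fold (tau y) in HO.
  assert (HT : 0 < tau y) by (apply tau_pos; lra).
  assert (HD : 0 < dr y) by (apply Hrpos; lra).
  assert (HE : 0 <= ddh (dr y * tau y ^ (n - 1))).
  { apply Hddh, Rmult_lt_0_compat; [exact HD|apply pow_lt, HT]. }
  exists (f y * (ddphi (dr y) + ddh (dr y * tau y ^ (n - 1)) * tau y ^ (2 * (n - 1)))).
  exists (ddh (dr y * tau y ^ (n - 1)) * dr y * tau y ^ (2 * n - 3)).
  split; [|split].
  - apply Rmult_le_pos; [left; apply f_pos; lra|].
    apply Rplus_le_le_0_compat; [apply Hddphi, HD|].
    apply Rmult_le_pos; [exact HE|left; apply pow_lt, HT].
  - apply Rmult_le_pos; [nra|left; apply pow_lt, HT].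
  - rewrite HO. unfold A, B. ring.
Qed.

Lemma n_pred_pos : 0 < INR n - 1.
Proof. apply (le_INR 2 n) in hn. simpl in hn. lra. Qed.

Lemma ddr_neg_of y : 0 < y < 1 -> 0 < A y -> B y < 0 -> ddr y < 0.
Proof.
  intros Hy HA HB. destruct (ode_structure y Hy) as [C [K [HC [HK E]]]].
  pose proof n_pred_pos.
  assert (C * ddr y < 0) by (rewrite E; apply Rmult_pos_neg; nra).
  destruct (Rlt_or_le (ddr y) 0) as [Hlt|Hge]; [exact Hlt|nra].
Qed.

Lemma ddr_pos_of y : 0 < y < 1 -> A y < 0 -> 0 < B y -> 0 < ddr y.
Proof.
  intros Hy HA HB. destruct (ode_structure y Hy) as [C [K [HC [HK E]]]].
  pose proof n_pred_pos.
  assert (0 < C * ddr y) by (rewrite E; apply Rmult_lt_0_compat; nra).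
  destruct (Rlt_or_le 0 (ddr y)) as [Hlt|Hle]; [exact Hlt|nra].
Qed.

Lemma A_pos_above y : 0 < y < 1 -> eta1 < w y -> 0 < A y.
Proof.
  intros Hy Hw. assert (HT : 0 < tau y) by (apply tau_pos; lra).
  assert (Hms : mu1 < mu0 * w y).
  { replace mu1 with (mu1 / mu0 * mu0) by (field; lra). nra. }
  destruct (Hdf_bounds (r y)) as [Hr0 _]; [left; apply r_pos; lra|].
  destruct (Hdf_bounds y) as [_ Hy1]; [lra|].
  assert (Hw0 : 0 < w y) by (apply w_pos; lra).
  assert (0 < df (r y) * w y - df y) by nra.
  unfold A. rewrite (dr_eq y) by lra. nra.
Qed.

Lemma B_neg_above y : 0 < y < 1 -> eta1 < w y -> B y < 0.
Proof.
  intros Hy Hw.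
  assert (HT : 0 < tau y) by (apply tau_pos; lra).
  assert (HD : dr y = w y * tau y) by (apply dr_eq; lra).
  assert (HDp : 0 < dr y) by (apply Hrpos; lra).
  assert (Hms : mu1 < mu0 * w y).
  { replace mu1 with (mu1 / mu0 * mu0) by (field; lra). nra. }
  destruct (Hdf_bounds (r y)) as [Hr0 Hr1']; [left; apply r_pos; lra|].
  destruct (Hdf_bounds y) as [Hy0 Hy1]; [lra|].
  unfold B. destruct (Rlt_or_le t0 (tau y)) as [HtT|HtT].
  - (* both slopes beyond t0: the (A6)-comparison applies *)
    assert (K := Hcmp1 (w y) Hw (tau y) HT HtT). rewrite <- HD in K.
    assert (0 < dphi (dr y)) by (apply Hdphi_sign; nra).
    assert (0 < dphi (tau y)) by (apply Hdphi_sign; auto).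
    assert (mu1 * (mu0 / mu1 * dphi (dr y)) = mu0 * dphi (dr y)) by (field; lra).
    nra.
  - destruct (Rlt_or_le t0 (dr y)) as [HtD|HtD].
    + assert (0 < dphi (dr y)) by (apply Hdphi_sign; auto).
      assert (dphi (tau y) <= 0) by (apply Hdphi_sign; auto). nra.
    + (* both at most t0: use the monotonicity of v phi'(v) *)
      assert (dphi (dr y) <= 0) by (apply Hdphi_sign; auto).
      assert (K := Hv_dphi (tau y) (dr y) HT ltac:(nra)).
      assert (K2 : dphi (tau y) < w y * dphi (dr y)).
      { set (p := dphi (dr y)) in *. rewrite HD in K.
        apply (Rmult_lt_reg_l (tau y)); nra. }
      assert (0 <= (df (r y) * w y - df y) * (- dphi (dr y))) by (apply Rmult_le_pos; nra).
      nra.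
Qed.

Lemma A_neg_below y : 0 < y < 1 -> w y < eta0 -> A y < 0.
Proof.
  intros Hy Hw. assert (HT : 0 < tau y) by (apply tau_pos; lra).
  assert (Hw0 : 0 < w y) by (apply w_pos; lra).
  assert (Hms : mu1 * w y < mu0).
  { replace mu0 with (mu1 * (mu0 / mu1)) by (field; lra). nra. }
  destruct (Hdf_bounds (r y)) as [_ Hr1']; [left; apply r_pos; lra|].
  destruct (Hdf_bounds y) as [Hy0 _]; [lra|].
  assert (df (r y) * w y - df y < 0) by nra.
  unfold A. rewrite (dr_eq y) by lra. nra.
Qed.

Lemma B_pos_below y : 0 < y < 1 -> w y < eta0 -> 0 < B y.
Proof.
  intros Hy Hw.
  assert (HT : 0 < tau y) by (apply tau_pos; lra).
  assert (HD : dr y = w y * tau y) by (apply dr_eq; lra).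
  assert (HDp : 0 < dr y) by (apply Hrpos; lra).
  assert (Hw0 : 0 < w y) by (apply w_pos; lra).
  assert (Hms : mu1 * w y < mu0).
  { replace mu0 with (mu1 * (mu0 / mu1)) by (field; lra). nra. }
  destruct (Hdf_bounds (r y)) as [Hr0 Hr1']; [left; apply r_pos; lra|].
  destruct (Hdf_bounds y) as [Hy0 Hy1]; [lra|].
  unfold B. destruct (Rlt_or_le t0 (dr y)) as [HtD|HtD].
  - (* both slopes beyond t0: the (A6)-comparison applies *)
    assert (K := Hcmp0 (w y) (conj Hw0 Hw) (tau y) HT ltac:(rewrite <- HD; exact HtD)).
    rewrite <- HD in K.
    assert (0 < dphi (dr y)) by (apply Hdphi_sign; auto).
    assert (mu0 * (mu1 / mu0 * dphi (dr y)) = mu1 * dphi (dr y)) by (field; lra).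
    assert (0 < dphi (tau y)) by nra.
    nra.
  - assert (dphi (dr y) <= 0) by (apply Hdphi_sign; auto).
    destruct (Rlt_or_le t0 (tau y)) as [HtT|HtT].
    + assert (0 < dphi (tau y)) by (apply Hdphi_sign; auto). nra.
    + (* both at most t0: use the monotonicity of v phi'(v) *)
      assert (K := Hv_dphi (dr y) (tau y) HDp ltac:(nra)).
      assert (K2 : w y * dphi (dr y) < dphi (tau y)).
      { set (p := dphi (dr y)) in *. rewrite HD in K.
        apply (Rmult_lt_reg_l (tau y)); nra. }
      assert (0 <= (df y - df (r y) * w y) * (- dphi (dr y))) by (apply Rmult_le_pos; nra).
      nra.
Qed.

Lemma w_falls_above y : 0 < y < 1 -> eta1 < w y -> ddr y < 0 /\ dw y < 0.
Proof.
  intros Hy Hw. pose proof (A_pos_above y Hy Hw) as HA.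
  assert (Hddr : ddr y < 0) by (apply ddr_neg_of; auto; apply B_neg_above; auto).
  split; [exact Hddr|].
  assert (HT : 0 < tau y) by (apply tau_pos; lra).
  assert (0 < A y / f y * dr y).
  { apply Rmult_lt_0_compat; [apply Rdiv_lt_0_compat; auto; apply f_pos; lra|].
    apply Hrpos; lra. }
  apply Rdiv_neg_pos; [nra|unfold Rsqr; nra].
Qed.

Lemma w_rises_below y : 0 < y < 1 -> w y < eta0 -> 0 < ddr y /\ 0 < dw y.
Proof.
  intros Hy Hw. pose proof (A_neg_below y Hy Hw) as HA.
  assert (Hddr : 0 < ddr y) by (apply ddr_pos_of; auto; apply B_pos_below; auto).
  split; [exact Hddr|].
  assert (HT : 0 < tau y) by (apply tau_pos; lra).
  assert (A y / f y * dr y < 0).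
  { assert (0 < dr y) by (apply Hrpos; lra).
    assert (A y / f y < 0) by (apply Rdiv_neg_pos; auto; apply f_pos; lra). nra. }
  apply Rdiv_lt_0_compat; [nra|unfold Rsqr; nra].
Qed.

(* Interior upper bound: if w x > eta1, then w > eta1 on all of (0,x], so r is
   concave there and r(y) >= r'(x) y; but y r'(y) >= k r(y) with
   k = w(x) mu0/mu1 > 1 forces r to vanish faster than linearly. *)
Lemma w_le_eta1_interior x : 0 < x < 1 -> w x <= eta1.
Proof.
  intros Hx. destruct (Rle_or_lt (w x) eta1) as [Hle|Hgt]; [exact Hle|exfalso].
  assert (Hbar := barrier_up w dw eta1 x Hx w_deriv
                    (fun y Hy H => proj2 (w_falls_above y Hy H)) Hgt).
  assert (Hconc : forall y, 0 < y <= x -> dr x <= dr y).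
  { intros y Hy. apply (nonincreasing_of_deriv dr ddr); [lra| |].
    - intros c Hc. apply Hr2. lra.
    - intros c Hc. assert (w x <= w c) by (apply Hbar; lra).
      left. apply w_falls_above; lra. }
  assert (Hdx : 0 < dr x) by (apply Hrpos; lra).
  assert (Hwx : 0 < w x) by (apply w_pos; lra).
  set (k := w x * mu0 / mu1).
  assert (Hk : 1 < k).
  { unfold k. apply (Rmult_lt_reg_r mu1); [lra|].
    replace (w x * mu0 / mu1 * mu1) with (w x * mu0) by (field; lra).
    replace (1 * mu1) with (mu1 / mu0 * mu0) by (field; lra). nra. }
  apply (no_superlinear_decay r dr (dr x) k x); try lra.
  - intros y Hy. apply r_deriv. lra.
  - intros rho Hrho.
    apply (slope_lower_from_origin r dr (fun y => 0 < y <= 1)); auto; try lra.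
    + intros e He. lra.
    + intros y Hy. apply r_deriv. lra.
    + intros y Hy. apply Hconc. lra.
  - intros y Hy. destruct (tau_bounds y ltac:(lra)) as [Hlo _].
    assert (Hwy : w x <= w y) by (apply Hbar; lra).
    assert (HT : 0 < tau y) by (apply tau_pos; lra).
    rewrite (dr_eq y) by lra. unfold k.
    apply (Rmult_le_reg_r mu1); [lra|].
    replace (w x * mu0 / mu1 * r y * mu1) with (w x * (mu0 * r y)) by (field; lra).
    apply Rle_trans with (w x * (tau y * (mu1 * y))); [apply Rmult_le_compat_l; lra|].
    assert (0 <= (w y - w x) * (tau y * (mu1 * y)))
      by (apply Rmult_le_pos; [lra|apply Rmult_le_pos; nra]).
    nra.
Qed.

(* Interior lower bound, symmetrically: if w x < eta0, then r is convex on (0,x],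
   r(y) <= r'(x) y, and y r'(y) <= k r(y) with k = w(x) mu1/mu0 < 1. *)
Lemma w_ge_eta0_interior x : 0 < x < 1 -> eta0 <= w x.
Proof.
  intros Hx. destruct (Rle_or_lt eta0 (w x)) as [Hle|Hlt]; [exact Hle|exfalso].
  assert (Hbar := barrier_down w dw eta0 x Hx w_deriv
                    (fun y Hy H => proj2 (w_rises_below y Hy H)) Hlt).
  assert (Hconv : forall y, 0 < y <= x -> dr y <= dr x).
  { intros y Hy. apply (nondecreasing_of_deriv dr ddr); [lra| |].
    - intros c Hc. apply Hr2. lra.
    - intros c Hc. assert (w c <= w x) by (apply Hbar; lra).
      left. apply w_rises_below; lra. }
  assert (Hdx : 0 < dr x) by (apply Hrpos; lra).
  assert (Hwx : 0 < w x) by (apply w_pos; lra).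
  set (k := w x * mu1 / mu0).
  assert (Hk : k < 1).
  { unfold k. apply (Rmult_lt_reg_r mu0); [lra|].
    replace (w x * mu1 / mu0 * mu0) with (w x * mu1) by (field; lra).
    replace (1 * mu0) with (mu0 / mu1 * mu1) by (field; lra). nra. }
  apply (no_sublinear_decay r dr (dr x) k x); try lra.
  - intros y Hy. apply r_deriv. lra.
  - intros y Hy. apply r_pos. lra.
  - intros rho Hrho.
    apply (slope_upper_from_origin r dr (fun y => 0 < y <= 1)); auto; try lra.
    + intros e He. lra.
    + intros y Hy. apply r_deriv. lra.
    + intros y Hy. apply Hconv. lra.
  - intros y Hy. destruct (tau_bounds y ltac:(lra)) as [_ Hhi].
    assert (Hwy : w y <= w x) by (apply Hbar; lra).
    assert (HT : 0 < tau y) by (apply tau_pos; lra).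
    rewrite (dr_eq y) by lra. unfold k.
    apply (Rmult_le_reg_r mu0); [lra|].
    replace (w x * mu1 / mu0 * r y * mu0) with (w x * (mu1 * r y)) by (field; lra).
    apply Rle_trans with (w x * (tau y * (mu0 * y))); [|apply Rmult_le_compat_l; lra].
    assert (0 <= (w x - w y) * (tau y * (mu0 * y)))
      by (apply Rmult_le_pos; [lra|apply Rmult_le_pos; nra]).
    nra.
Qed.

Lemma w_cont_at_1 : limit1_in w (fun x => 0 < x <= 1) (w 1) 1.
Proof.
  set (D01 := fun x => 0 < x <= 1).
  assert (H1 : D01 1) by (unfold D01; lra).
  assert (Hrc := deriv_within_cont _ _ _ _ (proj1 Hr1 1 H1)).
  assert (Hfc := deriv_within_cont _ _ _ _ (proj1 Hf (r 1) ltac:(lra))).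
  assert (Hfr : limit1_in (fun x => f (r x)) D01 (f (r 1)) 1).
  { apply (limit1_in_subset _ _ _ _ _ (limit_comp r f D01 (fun y => 0 <= y) _ _ 1 Hrc Hfc)).
    intros y Hy. split; auto. left. apply r_pos, Hy. }
  assert (Hf1 : limit1_in f D01 (f 1) 1).
  { apply (limit1_in_subset _ _ _ _ _ (deriv_within_cont _ _ _ _ (proj1 Hf 1 ltac:(lra)))).
    intros y Hy. unfold D01 in Hy; lra. }
  assert (Hf1p : 0 < f 1) by (apply f_pos; lra).
  assert (Hfr1p : 0 < f (r 1)) by (apply f_pos; lra).
  assert (Hinv : 0 < / f 1) by (apply Rinv_0_lt_compat; lra).
  apply (limit_mul dr (fun x => / (f (r x) * / f x))); [exact (proj2 Hr1 1 H1)|].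
  unfold tau, Rdiv. apply limit_inv; [|nra].
  apply limit_mul; [exact Hfr|]. apply limit_inv; [exact Hf1|lra].
Qed.

Theorem equilibrium_slope_bounds x : 0 < x <= 1 ->
  eta0 * (f (r x) / f x) <= dr x <= eta1 * (f (r x) / f x).
Proof.
  intros Hx.
  assert (Hw : eta0 <= w x <= eta1).
  { destruct (Req_dec x 1) as [->|Hne].
    - apply (bounds_at_right_end w 0 1); [lra|exact w_cont_at_1|].
      intros y Hy. split; [apply w_ge_eta0_interior|apply w_le_eta1_interior]; exact Hy.
    - split; [apply w_ge_eta0_interior|apply w_le_eta1_interior]; lra. }
  fold (tau x). rewrite (dr_eq x Hx).
  assert (0 < tau x) by (apply tau_pos, Hx). split; nra.
Qed.

End EquilibriumBounds.

(* Corollary 4.3.  (A1) and (A4) give phi'' >= 0 and h'' >= 0, (A5)-(A6) give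
   the sign pattern of phi', and the choice q0(s0) = mu1/mu0, q1(s1) = mu0/mu1
   yields the strict comparisons beyond eta0 <= s0 and eta1 >= s1. *)
Theorem corollary4p3
  (n : nat) (hn : (2 <= n)%nat)
  (kappa f df : R -> R)
  (phi dphi ddphi : R -> R) (h dh ddh : R -> R)
  (t0 : R) (q1 q0 dq1 dq0 : R -> R)
  (mu0 mu1 lambda : R) (r dr ddr : R -> R)
  (* setting: kappa continuous on [0,oo); f'' + kappa f = 0, f(0)=0, f'(0)=1 *)
  (Hkappa : forall x, 0 <= x -> cont_within (fun y => 0 <= y) kappa x)
  (Hf : C1_on (fun y => 0 <= y) f df)
  (Hdf : forall x, 0 <= x -> has_deriv_within (fun y => 0 <= y) df x (- kappa x * f x))
  (Hf0 : f 0 = 0) (Hdf0 : df 0 = 1)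
  (Hmup : mu_plus_inf_le_1 kappa)
  (Hmum : mu_minus_inf_finite kappa)
  (* (A1) *)
  (HA1a : C2_on (fun v => 0 < v) h dh ddh)
  (HA1b : strictly_convex_on (fun v => 0 < v) h)
  (* (A4) *)
  (HA4a : C2_on (fun v => 0 < v) phi dphi ddphi)
  (HA4b : forall v, 0 < v -> 0 < phi v)
  (HA4c : convex_on (fun v => 0 < v) phi)
  (* (A5) *)
  (HA5 : forall v w, 0 < v -> v < w -> v * dphi v < w * dphi w)
  (* (A6) *)
  (HA6t0 : 0 <= t0)
  (HA6phi : (0 < t0 /\ dphi t0 = 0) \/
            (t0 = 0 /\ limit1_in dphi (fun v => 0 < v) 0 0))
  (HA6q1 : forall s, 1 <= s ->
      is_lub (fun z => exists v, t0 < v /\ z = dphi v / dphi (s * v)) (q1 s))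
  (HA6q0 : forall s, 0 < s <= 1 ->
      is_glb (fun z => exists v, t0 / s < v /\ z = dphi v / dphi (s * v)) (q0 s))
  (HA6q1C1 : C1_on (fun s => 1 <= s) q1 dq1)
  (HA6q0C1 : C1_on (fun s => 0 < s <= 1) q0 dq0)
  (HA6q1lim : forall eps, 0 < eps -> exists M, forall s, M < s -> Rabs (q1 s) < eps)
  (HA6q0lim : forall M, exists d, 0 < d /\ forall s, 0 < s < d -> M < q0 s)
  (HA6dq1 : forall s, 1 <= s -> dq1 s < 0)
  (HA6dq0 : forall s, 0 < s <= 1 -> dq0 s < 0)
  (* bounds on f *)
  (Hmu : 0 < mu0 <= mu1)
  (Hfb1 : forall x, 0 <= x -> mu0 <= df x <= mu1)
  (Hfb2 : forall x, 0 <= x -> mu0 * x <= f x <= mu1 * x)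
  (* r is a regular equilibrium solution with r(1) = lambda > 0 *)
  (Hlam : 0 < lambda)
  (Hr1 : C1_on (fun x => 0 < x <= 1) r dr)
  (Hr2 : forall x, 0 < x < 1 -> derivable_pt_lim dr x (ddr x))
  (Hrpos : forall x, 0 < x <= 1 -> 0 < dr x)
  (Hreg : limit1_in r (fun x => 0 < x <= 1) 0 0)
  (Hrlam : r 1 = lambda)
  (Hode : forall x, 0 < x < 1 ->
     let tau := f (r x) / f x in
     f x * (ddphi (dr x) + ddh (dr x * tau ^ (n - 1)) * tau ^ (2 * (n - 1))) * ddr x
     = (INR n - 1) * (df (r x) * dphi tau - df x * dphi (dr x))
       - (INR n - 1) * (df (r x) * dr x - df x * tau)
         * ddh (dr x * tau ^ (n - 1)) * dr x * tau ^ (2 * n - 3)) :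
  forall s0 s1, 0 < s0 <= 1 -> q0 s0 = mu1 / mu0 ->
                1 <= s1 -> q1 s1 = mu0 / mu1 ->
  let eta0 := Rmin (mu0 / mu1) s0 in
  let eta1 := Rmax (mu1 / mu0) s1 in
  forall x, 0 < x <= 1 ->
    eta0 * (f (r x) / f x) <= dr x <= eta1 * (f (r x) / f x).
Proof.
  intros s0 s1 Hs0 Hq0s0 Hs1 Hq1s1 eta0 eta1.
  destruct HA4a as [[Hphi_deriv _] [Hdphi_deriv _]].
  destruct HA1a as [[Hh_deriv _] [Hdh_deriv _]].
  assert (Hdphi_mono : forall a b, 0 < a -> a <= b -> dphi a <= dphi b)
    by (apply (convex_deriv_mono phi); auto).
  assert (Hdh_mono : forall a b, 0 < a -> a <= b -> dh a <= dh b)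
    by (apply (convex_deriv_mono h); auto using strictly_convex_convex).
  assert (Hddphi : forall v, 0 < v -> 0 <= ddphi v)
    by (intros v Hv; apply (mono_deriv_nonneg dphi (ddphi v) v); auto).
  assert (Hddh : forall v, 0 < v -> 0 <= ddh v)
    by (intros v Hv; apply (mono_deriv_nonneg dh (ddh v) v); auto).
  assert (Hsign := dphi_sign dphi t0 HA5 HA6phi).
  assert (Hdphi_pos : forall v, 0 < v -> t0 < v -> 0 < dphi v)
    by (intros v Hv; apply Hsign, Hv).
  assert (Hcmp1 : forall s, eta1 < s -> forall T, 0 < T -> t0 < T ->
            dphi T < mu0 / mu1 * dphi (s * T)).
  { intros s Hs. rewrite <- Hq1s1.
    apply (q1_comparison dphi t0 q1 dq1 s1); auto.
    pose proof (Rmax_r (mu1 / mu0) s1). unfold eta1 in Hs. lra. }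
  assert (Hcmp0 : forall s, 0 < s < eta0 -> forall T, 0 < T -> t0 < s * T ->
            mu1 / mu0 * dphi (s * T) < dphi T).
  { intros s Hs. rewrite <- Hq0s0.
    apply (q0_comparison dphi t0 q0 dq0 s0); auto.
    pose proof (Rmin_r (mu0 / mu1) s0). unfold eta0 in Hs. lra. }
  apply (equilibrium_slope_bounds n hn f df mu0 mu1 Hmu Hf Hfb1 Hfb2
           dphi ddphi ddh t0 Hddphi Hddh HA5 Hsign eta0 eta1 (Rmax_l _ _) Hcmp1
           (Rmin_l _ _) Hcmp0 r dr ddr Hr1 Hr2 Hrpos Hreg); [lra|exact Hode].
Qed.
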